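(* There are infinitely many $\mathbb{Q}$-rational points on $O$. More precisely, let $Q\subset\mathbf{P}^4$ be the quadric surface given by $l=q=0$, where $$l:=x_0+x_1+x_2-3x_3-3x_4,$$ $$q:=x_0^2+x_1^2+x_2^2+9x_3^2-x_0x_1-x_0x_2-3x_0x_3-x_1x_2-3x_1x_3-3x_2x_3.$$ Then the double covering $\pi:O\to\mathbf{P}^4_{\mathbb{Q}}$ splits over $Q$; in particular, there are one or two $\mathbb{Q}$-rational points of $O$ above each $\mathbb{Q}$-rational point of $Q$.
   Context: Let $$\Delta'(x_0,\ldots,x_4):=\prod_{i_1,\ldots,i_4\in\{0,1\}}\big(\sqrt{x_0}+(-1)^{i_1}\sqrt{x_1}+(-1)^{i_2}\sqrt{x_2}+(-1)^{i_3}\sqrt{x_3}+(-1)^{i_4}\sqrt{x_4}\big)\in\mathbb{Q}[x_0,\ldots,x_4]$$ (symmetric, degree $8$). $O$ is the double covering $\pi:O\to\mathbf{P}^4_{\mathbb{Q}}$ given by $w^2=(-3)\Delta'(x_0,\ldots,x_4)$ (a hypersurface in $\mathbf{P}(4,1,1,1,1,1)$). ''Splits over $Q$'' means that $\pi^{-1}(Q)\to Q$ is a trivial double covering, i.e. $(-3)\Delta'$ restricted to $Q$ is a square. *)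

From HB Require Import structures.
From mathcomp Require Import all_boot all_order all_algebra.
From mathcomp Require Import mpoly.
Set Implicit Arguments.
Unset Strict Implicit.
Unset Printing Implicit Defensive.
Import Order.TTheory GRing.Theory Num.Theory.
Local Open Scope ring_scope.

Notation poly5 := {mpoly rat[5]}.

Definition xv (i : nat) : poly5 := 'X_(inord i).

(* Formal version of the product defining Delta': the variable y_i stands for
   sqrt(x_i).  Pprod(y) = prod_{s in {0,1}^4} (y_0 + sum_{k=1..4} (-1)^{s_k} y_k). *)
Definition Pprod : poly5 :=
  \prod_(s : {ffun 'I_4 -> bool})
     ('X_ord0 + \sum_(k < 4) (-1) ^+ (s k) * 'X_(lift ord0 k)).

(* Pprod is even in every variable (all exponents are even), and
   Delta'(x_0,...,x_4) = Pprod(sqrt x_0, ..., sqrt x_4); i.e. Delta' is obtained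
   from Pprod by halving every exponent. *)
Definition halfm (m : 'X_{1..5}) : 'X_{1..5} := [multinom (m i)./2 | i < 5].

Definition Delta' : poly5 :=
  \sum_(m <- msupp Pprod) Pprod@_m *: 'X_[halfm m].

Definition Fbranch : poly5 := (-3) *: Delta'.

Definition lQ : poly5 := xv 0 + xv 1 + xv 2 - 3 *: xv 3 - 3 *: xv 4.

Definition qQ : poly5 :=
  xv 0 ^+ 2 + xv 1 ^+ 2 + xv 2 ^+ 2 + 9 *: xv 3 ^+ 2
  - xv 0 * xv 1 - xv 0 * xv 2 - 3 *: (xv 0 * xv 3)
  - xv 1 * xv 2 - 3 *: (xv 1 * xv 3) - 3 *: (xv 2 * xv 3).

(* Q-rational points of O in the weighted projective space P(4,1,1,1,1,1):
   represented by (w, x) with x <> 0 and w^2 = (-3) Delta'(x). *)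
Definition on_O (p : rat * ('I_5 -> rat)) : Prop :=
  (exists i, p.2 i != 0) /\ p.1 ^+ 2 = Fbranch.@[p.2].

(* Equality of points of P(4,1,1,1,1,1): (w,x) ~ (lambda^4 w, lambda x). *)
Definition wequiv (p p' : rat * ('I_5 -> rat)) : Prop :=
  exists2 c : rat, c != 0 &
    p'.1 = c ^+ 4 * p.1 /\ forall i, p'.2 i = c * p.2 i.

(* Substituting x_i = y_i^2, the branch form Delta' becomes the product of the
   sixteen linear forms y_0 +- y_1 +- y_2 +- y_3 +- y_4.  An explicit quartic g
   and forms a, b with

     -9 Delta' = 3 g^2 + a l + b q

   certify that (-3) Delta' = g^2 modulo the ideal (l, q) of Q, so the double
   cover splits over Q.  The identity is checked by [ring] in the variables y,
   where both sides are explicit, and transported back to x by halving all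
   exponents.  The curve n |-> (n^2+3n+3, n^2+3, n^2-3n+3, 3, n^2) lies on Q
   and its points are pairwise non-proportional, which yields infinitely many
   rational points of O. *)

From HB Require Import structures.
From Stdlib Require Import ZArith.
From mathcomp Require Import all_boot all_order all_algebra.
From mathcomp Require Import mpoly ring ssrZ.
Set Implicit Arguments.
Unset Strict Implicit.
Unset Printing Implicit Defensive.
Import GRing.Theory Num.Theory.
Local Open Scope ring_scope.

(* Coefficients are binary integers: ring numerals are unary naturals, which
   is hopeless at the size of the coefficients below. *)
Variant term := Term of Z & nat & nat & nat & nat & nat.

Definition term_degree (t : term) : nat :=
  let: Term _ e0 e1 e2 e3 e4 := t in (e0 + e1 + e2 + e3 + e4)%N.

Section Forms.
Variable R : comNzRingType.

Definition form (ts : seq term) (y0 y1 y2 y3 y4 : R) : R :=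
  foldr (fun '(Term c e0 e1 e2 e3 e4) acc =>
    (int_of_Z c)%:~R * (y0 ^+ e0 * y1 ^+ e1 * y2 ^+ e2 * y3 ^+ e3 * y4 ^+ e4) + acc) 0 ts.

Definition l_form (y0 y1 y2 y3 y4 : R) : R := y0 + y1 + y2 - 3 * y3 - 3 * y4.

Definition q_form (y0 y1 y2 y3 y4 : R) : R :=
  y0 ^+ 2 + y1 ^+ 2 + y2 ^+ 2 + 9 * y3 ^+ 2 - y0 * y1 - y0 * y2 - 3 * (y0 * y3)
  - y1 * y2 - 3 * (y1 * y3) - 3 * (y2 * y3).

Definition signed_sum (y0 y1 y2 y3 y4 : R) (s1 s2 s3 s4 : bool) : R :=
  y0 + (-1) ^+ s1 * y1 + (-1) ^+ s2 * y2 + (-1) ^+ s3 * y3 + (-1) ^+ s4 * y4.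

End Forms.

Section FormsMorph.
Variables (R S : comNzRingType) (f : {rmorphism R -> S}) (y0 y1 y2 y3 y4 : R).

Lemma rmorph_form ts :
  f (form ts y0 y1 y2 y3 y4) = form ts (f y0) (f y1) (f y2) (f y3) (f y4).
Proof.
elim: ts => [|[c e0 e1 e2 e3 e4] ts IHts] /=; first exact: rmorph0.
by rewrite rmorphD IHts rmorphM rmorph_int !rmorphM !rmorphXn.
Qed.

Lemma rmorph_l_form :
  f (l_form y0 y1 y2 y3 y4) = l_form (f y0) (f y1) (f y2) (f y3) (f y4).
Proof. by rewrite /l_form !rmorphB !rmorphD !rmorphM !rmorph_nat. Qed.

Lemma rmorph_q_form :
  f (q_form y0 y1 y2 y3 y4) = q_form (f y0) (f y1) (f y2) (f y3) (f y4).
Proof. by rewrite /q_form !rmorphB !rmorphD !rmorphXn !rmorphM !rmorph_nat. Qed.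

End FormsMorph.

Section FormHomog.
Variables (R : comNzRingType) (y0 y1 y2 y3 y4 : {mpoly R[5]}).
Hypotheses (hom0 : y0 \is 1.-homog) (hom1 : y1 \is 1.-homog) (hom2 : y2 \is 1.-homog)
  (hom3 : y3 \is 1.-homog) (hom4 : y4 \is 1.-homog).

Lemma form_homog d ts :
  all (fun t => term_degree t == d) ts -> form ts y0 y1 y2 y3 y4 \is d.-homog.
Proof.
elim: ts => [|[c e0 e1 e2 e3 e4] ts IHts] /=; first by rewrite rpred0.
case/andP => /eqP deg_t /IHts hom_ts; apply: rpredD => //.
have hom_pow y e : y \is 1.-homog -> y ^+ e \is e.-homog.
  by move=> hom_y; have := dhomogMn e hom_y; rewrite mul1n.
have hom_mono : y0 ^+ e0 * y1 ^+ e1 * y2 ^+ e2 * y3 ^+ e3 * y4 ^+ e4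
    \is (e0 + e1 + e2 + e3 + e4).-homog.
  by do 4 (apply: dhomogM; last by apply: hom_pow); apply: hom_pow.
by rewrite mulrzl rpredMz // -deg_t.
Qed.

End FormHomog.

(* The certificate -9 Delta' = 3 g^2 + a l + b q: b is the quotient by q of
   -9 Delta' - 3 g^2 reduced modulo l (eliminating x_0), and a is the remaining
   quotient by l. *)
Definition g_terms : seq term :=
  [:: Term 192 0 0 0 0 4; Term 192 0 0 0 1 3; Term (-192) 0 0 0 3 1;
     Term (-192) 0 0 0 4 0; Term (-448) 0 0 1 0 3; Term (-384) 0 0 1 1 2;
     Term 384 0 0 1 2 1; Term 448 0 0 1 3 0; Term 320 0 0 2 0 2;
     Term (-320) 0 0 2 2 0; Term (-64) 0 0 3 0 1; Term 64 0 0 3 1 0;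
     Term (-128) 0 1 0 0 3; Term 128 0 1 0 3 0; Term 256 0 1 1 0 2;
     Term (-256) 0 1 1 2 0; Term (-128) 0 1 2 0 1; Term 128 0 1 2 1 0].

Definition a_terms : seq term :=
  [:: Term 36867 0 0 0 0 7; Term 36837 0 0 0 1 6; Term (-37521) 0 0 0 2 5;
     Term (-75543) 0 0 0 3 4; Term (-39447) 0 0 0 4 3; Term 33903 0 0 0 5 2;
     Term 35301 0 0 0 6 1; Term (-765) 0 0 0 7 0; Term (-159767) 0 0 1 0 6;
     Term (-134778) 0 0 1 1 5; Term 278727 0 0 1 2 4; Term 331348 0 0 1 3 3;
     Term (-42297) 0 0 1 4 2; Term (-124026) 0 0 1 5 1; Term (-16151) 0 0 1 6 0;
     Term 266231 0 0 2 0 5; Term 103347 0 0 2 1 4; Term (-589658) 0 0 2 2 3;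
     Term (-414554) 0 0 2 3 2; Term 79539 0 0 2 4 1; Term 54263 0 0 2 5 0;
     Term (-206763) 0 0 3 0 4; Term 83380 0 0 3 1 3; Term 499294 0 0 3 2 2;
     Term 160180 0 0 3 3 1; Term (-44715) 0 0 3 4 0; Term 67481 0 0 4 0 3;
     Term (-127973) 0 0 4 1 2; Term (-171749) 0 0 4 2 1; Term (-9319) 0 0 4 3 0;
     Term (-629) 0 0 5 0 2; Term 50854 0 0 5 1 1; Term 20107 0 0 5 2 0;
     Term (-4563) 0 0 6 0 1; Term (-6867) 0 0 6 1 0; Term 759 0 0 7 0 0;
     Term (-36887) 0 1 0 0 6; Term 12678 0 1 0 1 5; Term 8391 0 1 0 2 4;
     Term 61012 0 1 0 3 3; Term 105159 0 1 0 4 2; Term (-1146) 0 1 0 5 1;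
     Term (-16151) 0 1 0 6 0; Term 151742 0 1 1 0 5; Term (-46794) 0 1 1 1 4;
     Term (-214100) 0 1 1 2 3; Term (-22868) 0 1 1 3 2; Term 102966 0 1 1 4 1;
     Term 48062 0 1 1 5 0; Term (-234993) 0 1 2 0 4; Term 147100 0 1 2 1 3;
     Term 411898 0 1 2 2 2; Term 13468 0 1 2 3 1; Term (-57585) 0 1 2 4 0;
     Term 159812 0 1 3 0 3; Term (-198836) 0 1 3 1 2; Term (-201140) 0 1 3 2 1;
     Term 42308 0 1 3 3 0; Term (-37097) 0 1 4 0 2; Term 86974 0 1 4 1 1;
     Term 6679 0 1 4 2 0; Term (-930) 0 1 5 0 1; Term (-7842) 0 1 5 1 0;
     Term 849 0 1 6 0 0; Term (-9) 0 2 0 0 5; Term (-7245) 0 2 0 1 4;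
     Term (-16218) 0 2 0 2 3; Term (-246618) 0 2 0 3 2; Term (-203085) 0 2 0 4 1;
     Term (-27657) 0 2 0 5 0; Term (-1521) 0 2 1 0 4; Term 44700 0 2 1 1 3;
     Term 39162 0 2 1 2 2; Term 132252 0 2 1 3 1; Term 65295 0 2 1 4 0;
     Term 4470 0 2 2 0 3; Term (-111678) 0 2 2 1 2; Term (-139326) 0 2 2 2 1;
     Term (-122250) 0 2 2 3 0; Term (-5010) 0 2 3 0 2; Term 86460 0 2 3 1 1;
     Term 61806 0 2 3 2 0; Term (-7101) 0 2 4 0 1; Term (-20925) 0 2 4 1 0;
     Term 1971 0 2 5 0 0; Term 2133 0 3 0 0 4; Term 5556 0 3 0 1 3;
     Term 151134 0 3 0 2 2; Term 254388 0 3 0 3 1; Term 78165 0 3 0 4 0;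
     Term (-8124) 0 3 1 0 3; Term 5964 0 3 1 1 2; Term (-106932) 0 3 1 2 1;
     Term (-88764) 0 3 1 3 0; Term 19566 0 3 2 0 2; Term 37308 0 3 2 1 1;
     Term 86382 0 3 2 2 0; Term (-3036) 0 3 3 0 1; Term (-19164) 0 3 3 1 0;
     Term 1605 0 3 4 0 0; Term (-2151) 0 4 0 0 3; Term (-46053) 0 4 0 1 2;
     Term (-126693) 0 4 0 2 1; Term (-66663) 0 4 0 3 0; Term (-4329) 0 4 1 0 2;
     Term 21438 0 4 1 1 1; Term 39447 0 4 1 2 0; Term (-7101) 0 4 2 0 1;
     Term (-20925) 0 4 2 1 0; Term 1605 0 4 3 0 0; Term 7563 0 5 0 0 2;
     Term 34470 0 5 0 1 1; Term 28299 0 5 0 2 0; Term (-930) 0 5 1 0 1;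
     Term (-7842) 0 5 1 1 0; Term 1971 0 5 2 0 0; Term (-4563) 0 6 0 0 1;
     Term (-6867) 0 6 0 1 0; Term 849 0 6 1 0 0; Term 759 0 7 0 0 0;
     Term 12265 1 0 0 0 6; Term 12678 1 0 0 1 5; Term (-12345) 1 0 0 2 4;
     Term (-23468) 1 0 0 3 3; Term (-12345) 1 0 0 4 2; Term 12678 1 0 0 5 1;
     Term 12265 1 0 0 6 0; Term (-44866) 1 0 1 0 5; Term (-39882) 1 0 1 1 4;
     Term 74668 1 0 1 2 3; Term 74668 1 0 1 3 2; Term (-39882) 1 0 1 4 1;
     Term (-44866) 1 0 1 5 0; Term 57615 1 0 2 0 4; Term 18076 1 0 2 1 3;
     Term (-93446) 1 0 2 2 2; Term 18076 1 0 2 3 1; Term 57615 1 0 2 4 0;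
     Term (-26044) 1 0 3 0 3; Term 30796 1 0 3 1 2; Term 30796 1 0 3 2 1;
     Term (-26044) 1 0 3 3 0; Term (-4073) 1 0 4 0 2; Term (-28226) 1 0 4 1 1;
     Term (-4073) 1 0 4 2 0; Term 6750 1 0 5 0 1; Term 6750 1 0 5 1 0;
     Term (-1455) 1 0 6 0 0; Term (-3906) 1 1 0 0 5; Term 9270 1 1 0 1 4;
     Term (-15444) 1 1 0 2 3; Term (-15444) 1 1 0 3 2; Term 9270 1 1 0 4 1;
     Term (-3906) 1 1 0 5 0; Term 15534 1 1 1 0 4; Term (-26952) 1 1 1 1 3;
     Term (-30252) 1 1 1 2 2; Term (-26952) 1 1 1 3 1; Term 15534 1 1 1 4 0;
     Term (-17844) 1 1 2 0 3; Term 28644 1 1 2 1 2; Term 28644 1 1 2 2 1;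
     Term (-17844) 1 1 2 3 0; Term (-324) 1 1 3 0 2; Term (-35592) 1 1 3 1 1;
     Term (-324) 1 1 3 2 0; Term 8790 1 1 4 0 1; Term 8790 1 1 4 1 0;
     Term (-2826) 1 1 5 0 0; Term (-3825) 1 2 0 0 4; Term 13980 1 2 0 1 3;
     Term 37626 1 2 0 2 2; Term 13980 1 2 0 3 1; Term (-3825) 1 2 0 4 0;
     Term 19020 1 2 1 0 3; Term (-8220) 1 2 1 1 2; Term (-8220) 1 2 1 2 1;
     Term 19020 1 2 1 3 0; Term (-26070) 1 2 2 0 2; Term 11316 1 2 2 1 1;
     Term (-26070) 1 2 2 2 0; Term 15852 1 2 3 0 1; Term 15852 1 2 3 1 0;
     Term (-5409) 1 2 4 0 0; Term 2628 1 3 0 0 3; Term 2124 1 3 0 1 2;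
     Term 2124 1 3 0 2 1; Term 2628 1 3 0 3 0; Term (-12612) 1 3 1 0 2;
     Term (-11016) 1 3 1 1 1; Term (-12612) 1 3 1 2 0; Term 15852 1 3 2 0 1;
     Term 15852 1 3 2 1 0; Term (-6540) 1 3 3 0 0; Term (-8169) 1 4 0 0 2;
     Term (-20034) 1 4 0 1 1; Term (-8169) 1 4 0 2 0; Term 8790 1 4 1 0 1;
     Term 8790 1 4 1 1 0; Term (-5409) 1 4 2 0 0; Term 6750 1 5 0 0 1;
     Term 6750 1 5 0 1 0; Term (-2826) 1 5 1 0 0; Term (-1455) 1 6 0 0 0;
     Term (-9) 2 0 0 0 5; Term (-333) 2 0 0 1 4; Term (-90) 2 0 0 2 3;
     Term (-90) 2 0 0 3 2; Term (-333) 2 0 0 4 1; Term (-9) 2 0 0 5 0;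
     Term 783 2 0 1 0 4; Term 3996 2 0 1 1 3; Term 1530 2 0 1 2 2;
     Term 3996 2 0 1 3 1; Term 783 2 0 1 4 0; Term (-3978) 2 0 2 0 3;
     Term (-15678) 2 0 2 1 2; Term (-15678) 2 0 2 2 1; Term (-3978) 2 0 2 3 0;
     Term 8046 2 0 3 0 2; Term 22716 2 0 3 1 1; Term 8046 2 0 3 2 0;
     Term (-7101) 2 0 4 0 1; Term (-7101) 2 0 4 1 0; Term 1971 2 0 5 0 0;
     Term 783 2 1 0 0 4; Term 3996 2 1 0 1 3; Term 1530 2 1 0 2 2;
     Term 3996 2 1 0 3 1; Term 783 2 1 0 4 0; Term (-4788) 2 1 1 0 3;
     Term 6372 2 1 1 1 2; Term 6372 2 1 1 2 1; Term (-4788) 2 1 1 3 0;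
     Term 10026 2 1 2 0 2; Term (-3276) 2 1 2 1 1; Term 10026 2 1 2 2 0;
     Term (-7956) 2 1 3 0 1; Term (-7956) 2 1 3 1 0; Term 3807 2 1 4 0 0;
     Term (-3978) 2 2 0 0 3; Term (-15678) 2 2 0 1 2; Term (-15678) 2 2 0 2 1;
     Term (-3978) 2 2 0 3 0; Term 10026 2 2 1 0 2; Term (-3276) 2 2 1 1 1;
     Term 10026 2 2 1 2 0; Term (-10062) 2 2 2 0 1; Term (-10062) 2 2 2 1 0;
     Term 5886 2 2 3 0 0; Term 8046 2 3 0 0 2; Term 22716 2 3 0 1 1;
     Term 8046 2 3 0 2 0; Term (-7956) 2 3 1 0 1; Term (-7956) 2 3 1 1 0;
     Term 5886 2 3 2 0 0; Term (-7101) 2 4 0 0 1; Term (-7101) 2 4 0 1 0;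
     Term 3807 2 4 1 0 0; Term 1971 2 5 0 0 0; Term (-171) 3 0 0 0 4;
     Term 180 3 0 0 1 3; Term (-162) 3 0 0 2 2; Term 180 3 0 0 3 1;
     Term (-171) 3 0 0 4 0; Term 324 3 0 1 0 3; Term (-180) 3 0 1 1 2;
     Term (-180) 3 0 1 2 1; Term 324 3 0 1 3 0; Term (-1170) 3 0 2 0 2;
     Term (-4932) 3 0 2 1 1; Term (-1170) 3 0 2 2 0; Term 2340 3 0 3 0 1;
     Term 2340 3 0 3 1 0; Term (-1467) 3 0 4 0 0; Term 324 3 1 0 0 3;
     Term (-180) 3 1 0 1 2; Term (-180) 3 1 0 2 1; Term 324 3 1 0 3 0;
     Term (-2628) 3 1 1 0 2; Term 7416 3 1 1 1 1; Term (-2628) 3 1 1 2 0;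
     Term 1260 3 1 2 0 1; Term 1260 3 1 2 1 0; Term (-2700) 3 1 3 0 0;
     Term (-1170) 3 2 0 0 2; Term (-4932) 3 2 0 1 1; Term (-1170) 3 2 0 2 0;
     Term 1260 3 2 1 0 1; Term 1260 3 2 1 1 0; Term (-3330) 3 2 2 0 0;
     Term 2340 3 3 0 0 1; Term 2340 3 3 0 1 0; Term (-2700) 3 3 1 0 0;
     Term (-1467) 3 4 0 0 0; Term 153 4 0 0 0 3; Term 27 4 0 0 1 2;
     Term 27 4 0 0 2 1; Term 153 4 0 0 3 0; Term 279 4 0 1 0 2;
     Term 702 4 0 1 1 1; Term 279 4 0 1 2 0; Term (-189) 4 0 2 0 1;
     Term (-189) 4 0 2 1 0; Term 837 4 0 3 0 0; Term 279 4 1 0 0 2;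
     Term 702 4 1 0 1 1; Term 279 4 1 0 2 0; Term 342 4 1 1 0 1;
     Term 342 4 1 1 1 0; Term 1503 4 1 2 0 0; Term (-189) 4 2 0 0 1;
     Term (-189) 4 2 0 1 0; Term 1503 4 2 1 0 0; Term 837 4 3 0 0 0;
     Term (-117) 5 0 0 0 2; Term (-90) 5 0 0 1 1; Term (-117) 5 0 0 2 0;
     Term (-162) 5 0 1 0 1; Term (-162) 5 0 1 1 0; Term (-333) 5 0 2 0 0;
     Term (-162) 5 1 0 0 1; Term (-162) 5 1 0 1 0; Term (-522) 5 1 1 0 0;
     Term (-333) 5 2 0 0 0; Term 45 6 0 0 0 1; Term 45 6 0 0 1 0;
     Term 81 6 0 1 0 0; Term 81 6 1 0 0 0; Term (-9) 7 0 0 0 0].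

Definition b_terms : seq term :=
  [:: Term (-12544) 0 0 0 0 6; Term (-13056) 0 0 0 1 5; Term 10752 0 0 0 2 4;
     Term 22784 0 0 0 3 3; Term 10752 0 0 0 4 2; Term (-13056) 0 0 0 5 1;
     Term (-12544) 0 0 0 6 0; Term 47872 0 0 1 0 5; Term 51456 0 0 1 1 4;
     Term (-55552) 0 0 1 2 3; Term (-55552) 0 0 1 3 2; Term 51456 0 0 1 4 1;
     Term 47872 0 0 1 5 0; Term (-70656) 0 0 2 0 4; Term (-78592) 0 0 2 1 3;
     Term (-20224) 0 0 2 2 2; Term (-78592) 0 0 2 3 1; Term (-70656) 0 0 2 4 0;
     Term 54016 0 0 3 0 3; Term 79616 0 0 3 1 2; Term 79616 0 0 3 2 1;
     Term 54016 0 0 3 3 0; Term (-25600) 0 0 4 0 2; Term (-40192) 0 0 4 1 1;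
     Term (-25600) 0 0 4 2 0; Term 6912 0 0 5 0 1; Term 6912 0 0 5 1 0;
     Term (-768) 0 0 6 0 0; Term 6912 0 1 0 0 5; Term 2304 0 1 0 1 4;
     Term 34560 0 1 0 2 3; Term 34560 0 1 0 3 2; Term 2304 0 1 0 4 1;
     Term 6912 0 1 0 5 0; Term (-34560) 0 1 1 0 4; Term 15360 0 1 1 1 3;
     Term 79104 0 1 1 2 2; Term 15360 0 1 1 3 1; Term (-34560) 0 1 1 4 0;
     Term 59136 0 1 2 0 3; Term 14592 0 1 2 1 2; Term 14592 0 1 2 2 1;
     Term 59136 0 1 2 3 0; Term (-39168) 0 1 3 0 2; Term (-39936) 0 1 3 1 1;
     Term (-39168) 0 1 3 2 0; Term 14592 0 1 4 0 1; Term 14592 0 1 4 1 0;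
     Term (-2304) 0 1 5 0 0; Term (-9216) 0 2 0 0 4; Term (-74496) 0 2 0 1 3;
     Term (-151296) 0 2 0 2 2; Term (-74496) 0 2 0 3 1; Term (-9216) 0 2 0 4 0;
     Term 22272 0 2 1 0 3; Term 51456 0 2 1 1 2; Term 51456 0 2 1 2 1;
     Term 22272 0 2 1 3 0; Term (-42240) 0 2 2 0 2; Term (-51456) 0 2 2 1 1;
     Term (-42240) 0 2 2 2 0; Term 22272 0 2 3 0 1; Term 22272 0 2 3 1 0;
     Term (-4608) 0 2 4 0 0; Term 25344 0 3 0 0 3; Term 108288 0 3 0 1 2;
     Term 108288 0 3 0 2 1; Term 25344 0 3 0 3 0; Term (-26880) 0 3 1 0 2;
     Term (-64512) 0 3 1 1 1; Term (-26880) 0 3 1 2 0; Term 22272 0 3 2 0 1;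
     Term 22272 0 3 2 1 0; Term (-5376) 0 3 3 0 0; Term (-21504) 0 4 0 0 2;
     Term (-48384) 0 4 0 1 1; Term (-21504) 0 4 0 2 0; Term 14592 0 4 1 0 1;
     Term 14592 0 4 1 1 0; Term (-4608) 0 4 2 0 0; Term 6912 0 5 0 0 1;
     Term 6912 0 5 0 1 0; Term (-2304) 0 5 1 0 0; Term (-768) 0 6 0 0 0].

Definition Delta_split_form (R : comNzRingType) (y0 y1 y2 y3 y4 : R) : R :=
  3 * form g_terms y0 y1 y2 y3 y4 ^+ 2
  + form a_terms y0 y1 y2 y3 y4 * l_form y0 y1 y2 y3 y4
  + form b_terms y0 y1 y2 y3 y4 * q_form y0 y1 y2 y3 y4.

Lemma prod_signed_sums_split (R : comNzRingType) (y0 y1 y2 y3 y4 : R) :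
  -9 * \prod_(s1 : bool) \prod_(s2 : bool) \prod_(s3 : bool) \prod_(s4 : bool)
         signed_sum y0 y1 y2 y3 y4 s1 s2 s3 s4
  = Delta_split_form (y0 ^+ 2) (y1 ^+ 2) (y2 ^+ 2) (y3 ^+ 2) (y4 ^+ 2).
Proof.
(* simplifying the right-hand side would unfold the data lists *)
rewrite !big_bool [LHS]/= /signed_sum.
by cbv beta iota delta [Delta_split_form form foldr g_terms a_terms b_terms l_form q_form]; ring.
Qed.

Lemma rmorph_Delta_split_form (R S : comNzRingType) (f : {rmorphism R -> S})
    (y0 y1 y2 y3 y4 : R) :
  f (Delta_split_form y0 y1 y2 y3 y4)
  = Delta_split_form (f y0) (f y1) (f y2) (f y3) (f y4).
Proof.
by rewrite /Delta_split_form !rmorphD rmorphM rmorph_nat rmorphXn !rmorphM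
  !rmorph_form rmorph_l_form rmorph_q_form.
Qed.

Section HalveExponents.
Variable R : nzRingType.
Implicit Types (p q : {mpoly R[5]}) (m : 'X_{1..5}).

Definition halve p : {mpoly R[5]} := \sum_(m <- msupp p) p@_m *: 'X_[halfm m].

Lemma halveE p (r : seq 'X_{1..5}) : uniq r -> {subset msupp p <= r} ->
  halve p = \sum_(m <- r) p@_m *: 'X_[halfm m].
Proof.
move=> r_uniq supp_r.
rewrite (bigID (mem (msupp p))) /= [X in _ + X]big1 ?addr0; last first.
  by move=> m; rewrite mcoeff_msupp negbK => /eqP ->; rewrite scale0r.
rewrite -big_filter; apply: perm_big; apply: uniq_perm.
- exact: msupp_uniq.
- exact: filter_uniq.
by move=> m; rewrite mem_filter; case: (boolP (m \in msupp p)) => // /supp_r ->.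
Qed.

Lemma halve0 : halve 0 = 0.
Proof. by rewrite (@halveE 0 [::]) ?big_nil // => m; rewrite msupp0. Qed.

Lemma halveD p q : halve (p + q) = halve p + halve q.
Proof.
set r := undup (msupp p ++ msupp q).
have r_uniq : uniq r by exact: undup_uniq.
have supp_p : {subset msupp p <= r} by move=> m mp; rewrite mem_undup mem_cat mp.
have supp_q : {subset msupp q <= r} by move=> m mq; rewrite mem_undup mem_cat mq orbT.
have supp_pq : {subset msupp (p + q) <= r} by move=> m /msuppD_le; rewrite mem_undup.
rewrite (halveE r_uniq supp_pq) (halveE r_uniq supp_p) (halveE r_uniq supp_q).
by rewrite -big_split; apply: eq_bigr => m _; rewrite mcoeffD scalerDl.
Qed.

Lemma halveZ c p : halve (c *: p) = c *: halve p.
Proof.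
rewrite (@halveE _ (msupp p)) ?msupp_uniq //; last exact: msuppZ_le.
by rewrite scaler_sumr; apply: eq_bigr => m _; rewrite mcoeffZ scalerA.
Qed.

Lemma halveX m : halve 'X_[m] = 'X_[halfm m].
Proof. by rewrite /halve msuppX big_seq1 mcoeffX eqxx scale1r. Qed.

Definition doublem m : 'X_{1..5} := [multinom (m i).*2 | i < 5].

Lemma halfm_doublem m : halfm (doublem m) = m.
Proof. by apply/mnmP => i; rewrite !mnmE doubleK. Qed.

Definition square_vars : 5.-tuple {mpoly R[5]} := [tuple 'X_i ^+ 2 | i < 5].

Lemma halve_square_vars p : halve (p \mPo square_vars) = p.
Proof.
rewrite comp_mpolyEX (big_morph halve halveD halve0) [RHS]mpolyE.
apply: eq_bigr => m _; rewrite halveZ; congr (_ *: _).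
suff -> : 'X_[m] \mPo square_vars = 'X_[doublem m] by rewrite halveX halfm_doublem.
rewrite comp_mpolyX [RHS]mpolyXE_id; apply: eq_bigr => i _.
by rewrite tnth_mktuple mnmE -exprM mul2n.
Qed.
End HalveExponents.
Arguments square_vars {R}.

Lemma big_ffun4_bool (R : Type) (idx : R) (op : Monoid.com_law idx)
    (F : bool -> bool -> bool -> bool -> R) :
  \big[op/idx]_(s : {ffun 'I_4 -> bool})
      F (s (inord 0)) (s (inord 1)) (s (inord 2)) (s (inord 3))
  = \big[op/idx]_(s1 : bool) \big[op/idx]_(s2 : bool) \big[op/idx]_(s3 : bool)
      \big[op/idx]_(s4 : bool) F s1 s2 s3 s4.
Proof.
rewrite !pair_big /=.
pose tuple_of (s : {ffun 'I_4 -> bool}) := (s (inord 0), s (inord 1), s (inord 2), s (inord 3)).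
pose ffun_of (b : bool * bool * bool * bool) : {ffun 'I_4 -> bool} :=
  [ffun i : 'I_4 => nth false [:: b.1.1.1; b.1.1.2; b.1.2; b.2] i].
rewrite (reindex ffun_of) /=.
  by apply: eq_bigr => [[[[s1 s2] s3] s4]] _; rewrite !ffunE !inordK.
exists tuple_of => [[[[s1 s2] s3] s4]|s] _; first by rewrite /tuple_of !ffunE !inordK.
apply/ffunP => i; rewrite ffunE.
by case: i => [[|[|[|[|k]]]] lt_i4] //=; congr (s _); apply/val_inj; rewrite /= inordK.
Qed.

Lemma Pprod_signed_sums :
  Pprod = \prod_(s1 : bool) \prod_(s2 : bool) \prod_(s3 : bool) \prod_(s4 : bool)
            signed_sum (xv 0) (xv 1) (xv 2) (xv 3) (xv 4) s1 s2 s3 s4.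
Proof.
rewrite -big_ffun4_bool; apply: eq_bigr => s _.
rewrite /signed_sum /xv !big_ord_recl big_ord0 addr0 !addrA.
congr (_ + _ * _ + _ * _ + _ * _ + _ * _); repeat f_equal.
all: by apply/val_inj; rewrite /= inordK.
Qed.

Lemma xv_square_vars i : xv i \mPo square_vars = xv i ^+ 2.
Proof. by rewrite /xv comp_mpolyXU -(tnth_nth 0) tnth_mktuple. Qed.

Lemma Delta'_split :
  (-9 : rat) *: Delta' = Delta_split_form (xv 0) (xv 1) (xv 2) (xv 3) (xv 4).
Proof.
have Pprod_split :
    (-9 : rat) *: Pprod = Delta_split_form (xv 0) (xv 1) (xv 2) (xv 3) (xv 4) \mPo square_vars.
  transitivity (Delta_split_form (xv 0 ^+ 2) (xv 1 ^+ 2) (xv 2 ^+ 2) (xv 3 ^+ 2) (xv 4 ^+ 2)).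
    by rewrite -prod_signed_sums_split -Pprod_signed_sums scaleNr scaler_nat mulNr mulr_natl.
  by rewrite -!xv_square_vars -rmorph_Delta_split_form.
have -> : Delta' = halve Pprod by [].
by rewrite -[RHS]halve_square_vars -Pprod_split halveZ.
Qed.

Lemma lQ_l_form : lQ = l_form (xv 0) (xv 1) (xv 2) (xv 3) (xv 4).
Proof. by rewrite /lQ /l_form !scaler_nat !mulr_natl. Qed.

Lemma qQ_q_form : qQ = q_form (xv 0) (xv 1) (xv 2) (xv 3) (xv 4).
Proof. by rewrite /qQ /q_form !scaler_nat !mulr_natl. Qed.

Definition g_Q : poly5 := form g_terms (xv 0) (xv 1) (xv 2) (xv 3) (xv 4).
Definition a_Q : poly5 := 3^-1 *: form a_terms (xv 0) (xv 1) (xv 2) (xv 3) (xv 4).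
Definition b_Q : poly5 := 3^-1 *: form b_terms (xv 0) (xv 1) (xv 2) (xv 3) (xv 4).

Lemma Fbranch_split : Fbranch = g_Q ^+ 2 + a_Q * lQ + b_Q * qQ.
Proof.
rewrite /Fbranch.
have -> : (-3 : rat) = 3^-1 * -9 by [].
rewrite -scalerA Delta'_split /Delta_split_form lQ_l_form qQ_q_form.
rewrite !scalerDr -!scalerAl; congr (_ + _ + _).
by rewrite mulr_natl -scaler_nat scalerA mulVf // scale1r.
Qed.

Lemma xv_homog i : xv i \is 1.-homog.
Proof. by rewrite /xv dhomogX; apply/eqP; exact: mdeg1. Qed.

Lemma g_Q_homog : g_Q \is 4.-homog.
Proof. by apply: form_homog; [exact: xv_homog .. |]. Qed.

Lemma meval_square_mod (n : nat) (R : comNzRingType) (F G A B L Q : {mpoly R[n]}) x :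
  F = G ^+ 2 + A * L + B * Q -> L.@[x] = 0 -> Q.@[x] = 0 -> F.@[x] = G.@[x] ^+ 2.
Proof. by move=> -> L0 Q0; rewrite !mevalD rmorphXn !mevalM L0 Q0 !mulr0 !addr0. Qed.

Definition Q_point (n : nat) : 'I_5 -> rat := fun i =>
  [:: n%:R ^+ 2 + 3 * n%:R + 3; n%:R ^+ 2 + 3; n%:R ^+ 2 - 3 * n%:R + 3; 3; n%:R ^+ 2]`_i.

Lemma Q_pointE n k : (k < 5)%N ->
  Q_point n (inord k)
  = [:: n%:R ^+ 2 + 3 * n%:R + 3; n%:R ^+ 2 + 3; n%:R ^+ 2 - 3 * n%:R + 3; 3; n%:R ^+ 2]`_k.
Proof. by move=> lt_k5; rewrite /Q_point; rewrite inordK. Qed.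

Lemma Q_point_on_Q n : lQ.@[Q_point n] = 0 /\ qQ.@[Q_point n] = 0.
Proof.
rewrite lQ_l_form qQ_q_form /l_form /q_form /xv.
rewrite !mevalB !mevalD !mevalM !mevalXU !rmorph_nat !Q_pointE //=.
by split; ring.
Qed.

Lemma Q_point_inj n m (c : rat) : (forall i, Q_point m i = c * Q_point n i) -> n = m.
Proof.
move=> scaled; have := scaled (inord 3); have := scaled (inord 4).
rewrite !Q_pointE //= => x4 x3.
have c1 : c = 1 by apply: (mulIf (_ : 3 != 0)) => //; rewrite mul1r -x3.
by move: x4; rewrite c1 mul1r -!natrX => /eqP; rewrite eqr_nat eqn_exp2r // => /eqP.
Qed.

Theorem mainTheorem11 :
  (exists f : nat -> rat * ('I_5 -> rat),
      (forall n, on_O (f n)) /\ (forall n m, wequiv (f n) (f m) -> n = m))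
  /\
  (exists g a b : poly5,
      g \is 4.-homog /\ Fbranch = g ^+ 2 + a * lQ + b * qQ)
  /\
  (forall x : 'I_5 -> rat, (exists i, x i != 0) ->
      lQ.@[x] = 0 -> qQ.@[x] = 0 -> exists w : rat, w ^+ 2 = Fbranch.@[x]).
Proof.
split; [|split].
- exists (fun n => (g_Q.@[Q_point n], Q_point n)); split.
    move=> n; split; first by exists (inord 3); rewrite /= Q_pointE.
    by have [l0 q0] := Q_point_on_Q n; exact: esym (meval_square_mod Fbranch_split l0 q0).
  by move=> n m [c _ [_ /Q_point_inj]].
- by exists g_Q, a_Q, b_Q; split; [exact: g_Q_homog | exact: Fbranch_split].
- by move=> x _ l0 q0; exists g_Q.@[x]; rewrite (meval_square_mod Fbranch_split l0 q0).
Qed.
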